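(* Fix $l,r>0$, $0<\alpha<\beta<1$ and diffusion constants $D_1,D_2>0$, let $\delta=\frac{D_2-D_1}{D_2+D_1}$, and for each $Q_0\in\mathbb{R}$ let $A(Q_0,\delta)\in(0,A_M)$ be the unique solution $A$ of $G_2(Q_0,A,\delta)=0$. (a) If $D_1<D_2$ (i.e. $\delta>0$), then there exists $Q_0^-<0$ such that $\partial_{Q_0}A(Q_0,\delta)$ has the same sign as $l-r$ when $Q_0>Q_0^-$, and the opposite sign when $Q_0<Q_0^-$. (b) If $D_1>D_2$ (i.e. $\delta<0$), then there exists $Q_0^+>0$ such that $\partial_{Q_0}A(Q_0,\delta)$ has the sign opposite to that of $l-r$ when $Q_0<Q_0^+$, and the same sign as $l-r$ when $Q_0>Q_0^+$.
   Context: Setting: reduction of the steady zero-current Poisson–Nernst–Planck problem for two ion species with valences $\pm1$; $l,r>0$ are boundary concentrations, the permanent charge is $2Q_0$ on $(a,b)$ and $0$ elsewhere in $(0,1)$, $\alpha=H(a)/H(1)$, $\beta=H(b)/H(1)$ with $H(x)=\int_0^x ds/h(s)$ and $h>0$ the cross-sectional area, so $0<\alpha<\beta<1$. For $Q_0\in\mathbb{R}$, $A>0$ define $B=\frac{1-\beta}{\alpha}(l-A)+r$, $A_M=l+\frac{\alpha}{1-\beta}r$, $S_a=\sqrt{Q_0^2+A^2}$, $S_b=\sqrt{Q_0^2+B^2}$, $N=A-l+S_a-S_b$, and $G_2(Q_0,A,\delta)=\delta Q_0\ln\frac{S_a+\delta Q_0}{S_b+\delta Q_0}-N$. It is known that for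 each $Q_0$ there is a unique $A=A(Q_0,\delta)\in(0,A_M)$ with $G_2(Q_0,A,\delta)=0$, depending differentiably on $Q_0$; $A$ is the geometric mean $\sqrt{c_1(a)c_2(a)}$ of the two concentrations at $x=a$. *)

From Stdlib Require Import Reals.
From Coquelicot Require Import Coquelicot.
Open Scope R_scope.

Definition sgn (x : R) : R :=
  if Rlt_dec 0 x then 1 else if Rlt_dec x 0 then -1 else 0.

Definition delta_of (D1 D2 : R) : R := (D2 - D1) / (D2 + D1).

Definition B_of (l r alpha beta A : R) : R := (1 - beta) / alpha * (l - A) + r.
Definition A_M (l r alpha beta : R) : R := l + alpha / (1 - beta) * r.
Definition S_a (Q0 A : R) : R := sqrt (Q0 ^ 2 + A ^ 2).
Definition S_b (l r alpha beta Q0 A : R) : R :=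
  sqrt (Q0 ^ 2 + (B_of l r alpha beta A) ^ 2).
Definition N_of (l r alpha beta Q0 A : R) : R :=
  A - l + S_a Q0 A - S_b l r alpha beta Q0 A.

Definition G2 (l r alpha beta Q0 A delta : R) : R :=
  delta * Q0 * ln ((S_a Q0 A + delta * Q0) / (S_b l r alpha beta Q0 A + delta * Q0))
  - N_of l r alpha beta Q0 A.

(** Differentiating [G2 Q (A Q) δ = 0] gives [A' = Gq / (ua ub GA)] with [GA > 0], where
    [ua = S_a + δ Q], [ub = S_b + δ Q] and [Gq = δ ua ub ln (ua / ub) + Q (1 - δ²) (ua - ub)];
    so [A'] has the sign of [Gq]. On the curve, the bound [(u - v) t ln (u / v) ≤ (u - v)²]
    for [t ≤ u, v] turns [G2 = 0] into [sgn (ua - ub) = sgn (l - r)]; in particular [Gq = 0]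
    when [l = r]. For [δ > 0] and [l ≠ r], [sgn (l - r) Gq] is positive for [Q ≥ 0] (both of
    its terms have the sign of [ua - ub]), negative for very negative [Q] (the logarithmic term
    is dominated, as the logarithmic mean exceeds the geometric one), and has a positive
    derivative at each of its zeros: there the geometric, logarithmic and arithmetic means of
    [ua, ub] are ordered in a way that reduces the sign of the derivative to that of the
    polynomial [root_poly], which is then positive. Hence it changes sign exactly once, at
    some [Qm < 0]. The case [δ < 0] follows from the symmetry [G2 (- Q) A δ = G2 Q A (- δ)]. *)

From Stdlib Require Import Reals Lra Psatz.
From Coquelicot Require Import Coquelicot.
Open Scope R_scope.

Lemma sgn_cases x :
  (0 < x /\ sgn x = 1) \/ (x = 0 /\ sgn x = 0) \/ (x < 0 /\ sgn x = -1).
Proof.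
unfold sgn. destruct (Rlt_dec 0 x); [left; lra|].
destruct (Rlt_dec x 0); [right; right; lra | right; left; lra].
Qed.

Lemma sgn_eq_same_side x y :
  sgn x = sgn y <-> (0 < x -> 0 < y) /\ (x = 0 -> y = 0) /\ (x < 0 -> y < 0).
Proof.
destruct (sgn_cases x) as [[? ->]|[[? ->]|[? ->]]];
  destruct (sgn_cases y) as [[? ->]|[[? ->]|[? ->]]]; split; intros; lra.
Qed.

Lemma sgn_0 : sgn 0 = 0.
Proof. destruct (sgn_cases 0) as [[? _]|[[_ ->]|[? _]]]; lra. Qed.

Lemma mul_pos_transfer s w x : s * s = 1 -> 0 < s * w -> 0 < w * x -> 0 < s * x.
Proof.
intros Hs Hsw Hwx.
assert (E : s * w * (s * x) = w * x) by (transitivity (s * s * (w * x)); [ring | rewrite Hs; ring]).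
nra.
Qed.

Lemma sgn_sqr x : x <> 0 -> sgn x * sgn x = 1.
Proof. intros Hx. destruct (sgn_cases x) as [[_ ->]|[[? _]|[_ ->]]]; lra. Qed.

Lemma sgn_opp x : sgn (- x) = - sgn x.
Proof.
destruct (sgn_cases x) as [[Hx ->]|[[Hx ->]|[Hx ->]]];
  destruct (sgn_cases (- x)) as [[? ->]|[[? ->]|[? ->]]]; lra.
Qed.

Lemma sgn_div_pos x y : 0 < y -> sgn (x / y) = sgn x.
Proof.
intros Hy. assert (E : x = x / y * y) by (field; lra).
destruct (sgn_cases x) as [[Hx ->]|[[Hx ->]|[Hx ->]]];
  destruct (sgn_cases (x / y)) as [[? ->]|[[? ->]|[? ->]]]; nra.
Qed.

Lemma sgn_of_mul_pos s x : s * s = 1 -> 0 < s * x -> sgn x = s.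
Proof. intros Hs Hsx. destruct (sgn_cases x) as [[? ->]|[[? ->]|[? ->]]]; nra. Qed.

(** * Logarithmic means *)

Lemma ln_le_sub_1 x : 0 < x -> ln x <= x - 1.
Proof. intros Hx. pose proof (exp_ineq1_le (ln x)) as H. rewrite exp_ln in H; lra. Qed.

Lemma ln_mul_sub_1_nonneg x : 0 < x -> 0 <= ln x * (x - 1).
Proof.
intros Hx. destruct (Rle_lt_dec 1 x).
- assert (0 <= ln x) by (rewrite <- ln_1; apply ln_le; lra). nra.
- assert (ln x <= 0) by (rewrite <- ln_1; apply ln_le; lra). nra.
Qed.

Lemma ln_div_mul_sub_pos u v : 0 < u -> 0 < v -> u <> v -> 0 < ln (u / v) * (u - v).
Proof.
intros Hu Hv Huv.
assert (E : u / v - 1 = (u - v) / v) by (field; lra).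
destruct (Rtotal_order u v) as [H|[H|H]]; [|lra|].
- assert (ln (u / v) < 0).
  { rewrite <- ln_1. apply ln_increasing. apply Rdiv_lt_0_compat; lra.
    apply Rminus_lt. rewrite E. apply Rdiv_neg_pos; lra. }
  nra.
- assert (0 < ln (u / v)).
  { rewrite <- ln_1. apply ln_increasing; [lra|].
    apply Rminus_gt. rewrite E. apply Rdiv_lt_0_compat; lra. }
  nra.
Qed.

Lemma continuity_pt_of_ex_derive (f : R -> R) x : ex_derive f x -> continuity_pt f x.
Proof. intros H. apply continuity_pt_filterlim. apply (ex_derive_continuous f x H). Qed.

Lemma nondecreasing_sign_from_root (f df : R -> R) a x0 t :
  (forall x, a < x -> is_derive f x (df x) /\ 0 <= df x) ->
  a < x0 -> a < t -> f x0 = 0 -> 0 <= f t * (t - x0).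
Proof.
intros Hf Hx0 Ht Hroot.
assert (Hin : forall x, Rmin x0 t <= x -> a < x)
  by (intros x Hx; apply Rlt_le_trans with (2 := Hx); apply Rmin_glb_lt; lra).
destruct (MVT_gen f x0 t df) as [c [Hc Hmvt]].
- intros x [Hx _]. apply Hf, Hin; lra.
- intros x [Hx _]. apply continuity_pt_of_ex_derive. eexists. apply Hf, Hin, Hx.
- destruct (Hf c (Hin c (proj1 Hc))) as [_ Hdc].
  rewrite Hroot, Rminus_0_r in Hmvt. rewrite Hmvt.
  replace (df c * (t - x0) * (t - x0)) with (df c * ((t - x0) * (t - x0))) by ring.
  apply Rmult_le_pos; [exact Hdc | apply Rle_0_sqr].
Qed.

Lemma log_mean_le_arith_mean u v : 0 < u -> 0 < v ->
  2 * (u - v) ^ 2 <= ln (u / v) * (u - v) * (u + v).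
Proof.
intros Hu Hv.
assert (Ht : 0 < u / v) by (apply Rdiv_lt_0_compat; lra).
assert (Hpsi : 0 <= (ln (u / v) - 2 * (u / v - 1) / (u / v + 1)) * (u / v - 1)).
{ apply (nondecreasing_sign_from_root (fun t => ln t - 2 * (t - 1) / (t + 1))
           (fun t => (t - 1) ^ 2 / (t * (t + 1) ^ 2)) 0); [|lra|lra|].
  - intros x Hx. split.
    + auto_derive; [repeat split; lra|]. field. lra.
    + apply Rdiv_le_0_compat; [apply pow2_ge_0|].
      apply Rmult_lt_0_compat; [lra|]. apply pow_lt; lra.
  - rewrite ln_1. field. }
assert (E : ln (u / v) * (u - v) * (u + v) - 2 * (u - v) ^ 2
            = v ^ 2 * (u / v + 1) * ((ln (u / v) - 2 * (u / v - 1) / (u / v + 1)) * (u / v - 1)))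
  by (field; lra).
assert (0 <= v ^ 2 * (u / v + 1)) by (apply Rmult_le_pos; [apply pow2_ge_0 | lra]).
nra.
Qed.

Lemma geo_mean_le_log_mean u v : 0 < u -> 0 < v ->
  ln (u / v) ^ 2 * (u * v) <= (u - v) ^ 2.
Proof.
intros Hu Hv.
assert (Ht : 0 < u / v) by (apply Rdiv_lt_0_compat; lra).
set (w := sqrt (u / v)).
assert (Hw : 0 < w) by (apply sqrt_lt_R0; exact Ht).
assert (Eu : u = w * w * v) by (unfold w; rewrite sqrt_sqrt by lra; field; lra).
assert (Eln : ln (u / v) = 2 * ln w).
{ rewrite Eu. replace (w * w * v / v) with (w * w) by (field; lra). rewrite ln_mult; lra. }
clearbody w.
assert (Hphi : 0 <= (w - / w - 2 * ln w) * (w - 1)).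
{ apply (nondecreasing_sign_from_root (fun w => w - / w - 2 * ln w)
           (fun w => (1 - / w) ^ 2) 0); [|lra|lra|].
  - intros x Hx. split; [|apply pow2_ge_0]. auto_derive; [repeat split; lra|]. field. lra.
  - rewrite ln_1. field. }
pose proof (ln_mul_sub_1_nonneg w Hw) as Hlnw.
assert (Hbound : (2 * ln w) ^ 2 <= (w - / w) ^ 2).
{ destruct (Req_dec w 1) as [->|Hw1]; [rewrite ln_1, Rinv_1; lra|].
  set (X := w - / w - 2 * ln w) in Hphi.
  assert (Hsq : 0 < (w - 1) ^ 2) by (apply pow2_gt_0; lra).
  assert (0 <= X * (X + 4 * ln w)).
  { apply (Rmult_le_reg_r ((w - 1) ^ 2)); [exact Hsq|]. nra. }
  replace (w - / w) with (X + 2 * ln w) by (unfold X; ring). nra. }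
rewrite Eln, Eu.
replace (w * w * v - v) with ((w - / w) * w * v) by (field; lra).
assert (0 <= (w * v) ^ 2) by apply pow2_ge_0. nra.
Qed.

Lemma mul_ln_div_le_sub u v t : 0 < v -> v <= u -> t <= v -> t * ln (u / v) <= u - v.
Proof.
intros Hv Hvu Ht.
assert (Hq : 1 <= u / v) by (apply (Rmult_le_reg_r v); [lra|]; field_simplify; lra).
assert (H0 : 0 <= ln (u / v)) by (rewrite <- ln_1; apply ln_le; lra).
pose proof (ln_le_sub_1 (u / v) ltac:(lra)) as H1.
assert (E : v * (u / v - 1) = u - v) by (field; lra).
destruct (Rle_lt_dec t 0); nra.
Qed.

Lemma sub_mul_ln_div_le u v t : 0 < u -> 0 < v -> t <= u -> t <= v ->
  (u - v) * (t * ln (u / v)) <= (u - v) ^ 2.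
Proof.
intros Hu Hv Htu Htv. destruct (Rle_lt_dec v u).
- pose proof (mul_ln_div_le_sub u v t Hv r Htv). nra.
- pose proof (mul_ln_div_le_sub v u t Hu ltac:(lra) Htu).
  assert (E : ln (u / v) = - ln (v / u))
    by (rewrite <- ln_Rinv by (apply Rdiv_lt_0_compat; lra); f_equal; field; lra).
  rewrite E. nra.
Qed.




Lemma sub_mul_ln_gap_neg u v t m : 0 < u -> 0 < v -> u <> v -> 0 <= t ->
  t * u < m -> t * v < m -> (u - v) * (t * (u * v) * ln (u / v) - m * (u - v)) < 0.
Proof.
intros Hu Hv Huv Ht Hum Hvm.
pose proof (geo_mean_le_log_mean u v Hu Hv) as Hgeo.
assert (Hsq : 0 < (u - v) ^ 2) by (apply pow2_gt_0; lra).
assert (Htu : 0 <= t * u) by nra. assert (Htv : 0 <= t * v) by nra.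
assert (Htuv : t ^ 2 * (u * v) < m ^ 2).
{ replace (t ^ 2 * (u * v)) with ((t * u) * (t * v)) by ring.
  apply Rle_lt_trans with ((t * u) * m); [apply Rmult_le_compat_l; lra|].
  replace (m ^ 2) with (m * m) by ring. apply Rmult_lt_compat_r; lra. }
remember ((u - v) * (t * (u * v) * ln (u / v))) as X eqn:EX.
assert (HX : X ^ 2 < (m * (u - v) ^ 2) ^ 2).
{ apply Rle_lt_trans with (t ^ 2 * (u * v) * (u - v) ^ 4).
  - replace (X ^ 2) with (t ^ 2 * (u * v) * (u - v) ^ 2 * (ln (u / v) ^ 2 * (u * v)))
      by (rewrite EX; ring).
    replace (t ^ 2 * (u * v) * (u - v) ^ 4) with (t ^ 2 * (u * v) * (u - v) ^ 2 * (u - v) ^ 2)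
      by ring.
    apply Rmult_le_compat_l; [|exact Hgeo]. apply Rmult_le_pos; nra.
  - replace ((m * (u - v) ^ 2) ^ 2) with (m ^ 2 * (u - v) ^ 4) by ring.
    apply Rmult_lt_compat_r; [nra | exact Htuv]. }
assert (X < m * (u - v) ^ 2) by (assert (0 < m * (u - v) ^ 2) by (apply Rmult_lt_0_compat; lra); nra).
replace ((u - v) * (t * (u * v) * ln (u / v) - m * (u - v))) with (X - m * (u - v) ^ 2)
  by (rewrite EX; ring).
lra.
Qed.

Lemma root_bands u v t m : 0 < u -> 0 < v -> 0 < t -> u <> v ->
  t * (u * v) * ln (u / v) = m * (u - v) ->
  2 * t * (u * v) <= m * (u + v) /\ m ^ 2 <= t ^ 2 * (u * v).
Proof.
intros Hu Hv Ht Huv Hroot.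
assert (Hsq : 0 < (u - v) ^ 2) by (apply pow2_gt_0; lra).
assert (Htuv : 0 < t * (u * v)) by (apply Rmult_lt_0_compat; nra).
split.
- pose proof (log_mean_le_arith_mean u v Hu Hv) as Hlow.
  apply (Rmult_le_reg_r ((u - v) ^ 2) _ _ Hsq).
  replace (m * (u + v) * (u - v) ^ 2) with (t * (u * v) * ln (u / v) * (u - v) * (u + v))
    by (rewrite Hroot; ring).
  replace (2 * t * (u * v) * (u - v) ^ 2) with (t * (u * v) * (2 * (u - v) ^ 2)) by ring.
  replace (t * (u * v) * ln (u / v) * (u - v) * (u + v))
    with (t * (u * v) * (ln (u / v) * (u - v) * (u + v))) by ring.
  apply Rmult_le_compat_l; lra.
- pose proof (geo_mean_le_log_mean u v Hu Hv) as Hup.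
  apply (Rmult_le_reg_r ((u - v) ^ 2) _ _ Hsq).
  replace (m ^ 2 * (u - v) ^ 2) with ((t * (u * v) * ln (u / v)) ^ 2) by (rewrite Hroot; ring).
  replace ((t * (u * v) * ln (u / v)) ^ 2) with (t ^ 2 * (u * v) * (ln (u / v) ^ 2 * (u * v)))
    by ring.
  apply Rmult_le_compat_l; [nra | exact Hup].
Qed.


Lemma sqrt_sum_sqr_gt_abs Q A : A <> 0 -> Rabs Q < sqrt (Q ^ 2 + A ^ 2).
Proof.
intros HA. rewrite <- sqrt_Rsqr_abs. apply sqrt_lt_1; [apply Rle_0_sqr| |].
- pose proof (pow2_ge_0 Q). pose proof (pow2_ge_0 A). lra.
- unfold Rsqr. pose proof (pow2_gt_0 A HA). lra.
Qed.

Lemma sqrt_sum_sqr_pos Q A : A <> 0 -> 0 < sqrt (Q ^ 2 + A ^ 2).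
Proof. intros HA. pose proof (sqrt_sum_sqr_gt_abs Q A HA). pose proof (Rabs_pos Q). lra. Qed.

Lemma shifted_sqrt_pos Q A t : A <> 0 -> Rabs t <= 1 -> 0 < sqrt (Q ^ 2 + A ^ 2) + t * Q.
Proof.
intros HA Ht. pose proof (sqrt_sum_sqr_gt_abs Q A HA).
assert (Rabs (t * Q) <= Rabs Q).
{ rewrite Rabs_mult. pose proof (Rabs_pos Q). nra. }
pose proof (Rabs_maj2 (t * Q)). lra.
Qed.

Lemma sgn_sqrt_sum_sqr_sub Q A B : 0 <= A -> 0 <= B ->
  sgn (sqrt (Q ^ 2 + A ^ 2) - sqrt (Q ^ 2 + B ^ 2)) = sgn (A - B).
Proof.
intros HA HB. apply sgn_eq_same_side.
destruct (Rtotal_order A B) as [H|[->|H]].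
- assert (sqrt (Q ^ 2 + A ^ 2) < sqrt (Q ^ 2 + B ^ 2)) by (apply sqrt_lt_1; nra).
  repeat split; intros; lra.
- repeat split; intros; lra.
- assert (sqrt (Q ^ 2 + B ^ 2) < sqrt (Q ^ 2 + A ^ 2)) by (apply sqrt_lt_1; nra).
  repeat split; intros; lra.
Qed.

Lemma mul_shifted_sqrt_lt Q A t : 0 < t < 1 -> 0 <= A -> t * A < (1 - t) * - Q ->
  t * (sqrt (Q ^ 2 + A ^ 2) + t * Q) < - Q * (1 - t ^ 2).
Proof.
intros Ht HA HQ.
assert (Hs : sqrt (Q ^ 2 + A ^ 2) <= - Q + A).
{ rewrite <- (sqrt_pow2 (- Q + A)) by nra. apply sqrt_le_1; nra. }
nra.
Qed.

(** * The derivative of [gq] at its roots *)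

Definition gq d Q sa sb : R :=
  d * ((sa + d * Q) * (sb + d * Q)) * ln ((sa + d * Q) / (sb + d * Q))
  + Q * (1 - d ^ 2) * ((sa + d * Q) - (sb + d * Q)).

(* The derivative of [gq] in [Q] when [sa] and [sb] have derivatives [Q / sa] and
   [Q / sb], as [sqrt (Q ^ 2 + A ^ 2)] does for fixed [A]. *)
Definition gq_dQ d Q sa sb : R :=
  let u := sa + d * Q in let v := sb + d * Q in
  let p := Q / sa + d in let q := Q / sb + d in
  d * (p * v + q * u) * ln (u / v) + d * (p * v - q * u)
  + (1 - d ^ 2) * (u - v) + Q * (1 - d ^ 2) * (p - q).

Definition root_poly x y d :=
  (1 - 2 * d ^ 2) * (x * y) ^ 2 + d * (1 + d ^ 2) * (x + y) * (x * y)
  + (1 - 3 * d ^ 2) * (x * y) - (x + y - d) ^ 2.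

(* [root_poly] in the coordinates [e = 1 - d], [m = (x - 1) + (y - 1)], [n = (x - 1) * (y - 1)]. *)
Lemma symmetric_root_poly_pos m n e : 0 < m -> 0 < n -> 0 < e < 1 -> 4 * n <= m ^ 2 ->
  (e * (2 - e)) ^ 2 <= (1 - e) ^ 2 * (e ^ 2 + e * m + n) ->
  2 * (1 - e) * n <= e ^ 2 * (2 + m) ->
  0 < - 2 * e ^ 3 + e ^ 2 * m * (2 - 3 * e) + e ^ 2 * m ^ 2 * (1 - e)
      + n * (6 * e - e ^ 2 - 2 * e ^ 3) + n * m * e * (4 - e - e ^ 2)
      + n ^ 2 * (- 1 + 4 * e - 2 * e ^ 2).
Proof.
intros Hm Hn He Hmn Hup Hlow.
assert (0 < e * m) by nra. assert (0 < e * n) by nra. assert (0 < e * (1 - e)) by nra.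
assert (0 < m * n) by nra. assert (0 < e * e) by nra.
nra.
Qed.

Lemma root_poly_pos x y d : 1 < x -> 1 < y -> 0 < d < 1 ->
  (1 - d ^ 2) ^ 2 <= d ^ 2 * ((x - d) * (y - d)) ->
  2 * d * ((x - d) * (y - d)) <= (1 - d ^ 2) * (x + y - 2 * d) ->
  0 < root_poly x y d.
Proof.
intros Hx Hy Hd Hup Hlow.
replace (root_poly x y d) with
  (- 2 * (1 - d) ^ 3 + (1 - d) ^ 2 * (x + y - 2) * (2 - 3 * (1 - d))
   + (1 - d) ^ 2 * (x + y - 2) ^ 2 * (1 - (1 - d))
   + (x - 1) * (y - 1) * (6 * (1 - d) - (1 - d) ^ 2 - 2 * (1 - d) ^ 3)
   + (x - 1) * (y - 1) * (x + y - 2) * (1 - d) * (4 - (1 - d) - (1 - d) ^ 2)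
   + ((x - 1) * (y - 1)) ^ 2 * (- 1 + 4 * (1 - d) - 2 * (1 - d) ^ 2))
  by (unfold root_poly; ring).
apply symmetric_root_poly_pos; [lra | nra | lra | pose proof (pow2_ge_0 (x - y)); nra | |].
- replace (((1 - d) * (2 - (1 - d))) ^ 2) with ((1 - d ^ 2) ^ 2) by ring.
  replace ((1 - (1 - d)) ^ 2 * ((1 - d) ^ 2 + (1 - d) * (x + y - 2) + (x - 1) * (y - 1)))
    with (d ^ 2 * ((x - d) * (y - d))) by ring.
  exact Hup.
- assert (E : (1 - d) ^ 2 * (2 + (x + y - 2)) - 2 * (1 - (1 - d)) * ((x - 1) * (y - 1))
            = (1 - d ^ 2) * (x + y - 2 * d) - 2 * d * ((x - d) * (y - d))) by ring.
  lra.
Qed.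

Section ScaledRoot.

Variables s x y d : R.
Hypothesis s_pos : 0 < s.
Hypothesis x_gt1 : 1 < x.
Hypothesis y_gt1 : 1 < y.
Hypothesis d_range : 0 < d < 1.
Hypothesis gq_root : gq d (- s) (s * x) (s * y) = 0.

Lemma gq_root_ln :
  ln ((s * x + d * - s) / (s * y + d * - s)) = (1 - d ^ 2) * (x - y) / (d * ((x - d) * (y - d))).
Proof.
unfold gq in gq_root.
assert (Hp : 0 < d * s ^ 2 * ((x - d) * (y - d))) by (repeat apply Rmult_lt_0_compat; nra).
apply (Rmult_eq_reg_l (d * s ^ 2 * ((x - d) * (y - d)))); [|lra].
field_simplify; lra.
Qed.

Lemma gq_dQ_at_root :
  (s * x - s * y) * gq_dQ d (- s) (s * x) (s * y)
  = s ^ 2 * (x - y) ^ 2 * (root_poly x y d / (x * y * ((x - d) * (y - d)))).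
Proof.
unfold gq_dQ. cbv zeta. rewrite gq_root_ln. unfold root_poly. field. repeat split; lra.
Qed.

Lemma gq_root_bands : x <> y ->
  (1 - d ^ 2) ^ 2 <= d ^ 2 * ((x - d) * (y - d)) /\
  2 * d * ((x - d) * (y - d)) <= (1 - d ^ 2) * (x + y - 2 * d).
Proof.
intros Hxy.
assert (Hs2 : 0 < s ^ 2) by (apply pow2_gt_0; lra).
assert (Hu : 0 < s * x + d * - s) by nra. assert (Hv : 0 < s * y + d * - s) by nra.
assert (Huv : s * x + d * - s <> s * y + d * - s) by (intros E; apply Hxy; nra).
destruct (root_bands _ _ d (s * (1 - d ^ 2)) Hu Hv (proj1 d_range) Huv)
  as [Hlow Hup]; [unfold gq in gq_root; lra|].
split; apply (Rmult_le_reg_l (s ^ 2) _ _ Hs2).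
- replace (s ^ 2 * (1 - d ^ 2) ^ 2) with ((s * (1 - d ^ 2)) ^ 2) by ring.
  replace (s ^ 2 * (d ^ 2 * ((x - d) * (y - d))))
    with (d ^ 2 * ((s * x + d * - s) * (s * y + d * - s))) by ring.
  exact Hup.
- replace (s ^ 2 * (2 * d * ((x - d) * (y - d))))
    with (2 * d * ((s * x + d * - s) * (s * y + d * - s))) by ring.
  replace (s ^ 2 * ((1 - d ^ 2) * (x + y - 2 * d)))
    with (s * (1 - d ^ 2) * (s * x + d * - s + (s * y + d * - s))) by ring.
  exact Hlow.
Qed.

End ScaledRoot.

Lemma gq_dQ_root_sign d Q sa sb : 0 < d < 1 -> Q < 0 -> - Q < sa -> - Q < sb -> sa <> sb ->
  gq d Q sa sb = 0 -> 0 < (sa - sb) * gq_dQ d Q sa sb.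
Proof.
intros Hd HQ Hsa Hsb Hne Hroot.
remember (- Q) as s eqn:Es. assert (Hs : 0 < s) by lra.
replace Q with (- s) in * by lra. clear Es.
remember (sa / s) as x eqn:Ex. remember (sb / s) as y eqn:Ey.
assert (Esa : sa = s * x) by (subst x; field; lra).
assert (Esb : sb = s * y) by (subst y; field; lra).
subst sa sb. clear Ex Ey.
assert (Hx : 1 < x) by (apply (Rmult_lt_reg_l s); lra).
assert (Hy : 1 < y) by (apply (Rmult_lt_reg_l s); lra).
assert (Hxy : x <> y) by (intros E; apply Hne; rewrite E; reflexivity).
destruct (gq_root_bands s x y d Hs Hx Hy Hd Hroot Hxy) as [Hup Hlow].
rewrite (gq_dQ_at_root s x y d Hs Hx Hy Hd Hroot).
assert (0 < (x - y) ^ 2) by (apply pow2_gt_0; lra).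
pose proof (root_poly_pos x y d Hx Hy Hd Hup Hlow).
apply Rmult_lt_0_compat; [nra|].
apply Rdiv_lt_0_compat; [assumption|]. apply Rmult_lt_0_compat; nra.
Qed.

(** * Continuous functions whose roots all cross upwards *)

Lemma continuity_pt_sign_near (g : R -> R) x : continuity_pt g x -> g x <> 0 ->
  exists del, 0 < del /\ forall y, Rabs (y - x) < del -> 0 < g y * g x.
Proof.
intros Hc Hx.
destruct (Hc (Rabs (g x)) (Rabs_pos_lt _ Hx)) as [del [Hdel Hnear]].
exists del. split; [exact Hdel|]. intros y Hy.
assert (Hgy : Rabs (g y - g x) < Rabs (g x)).
{ destruct (Req_dec y x) as [->|Hne]; [rewrite Rminus_diag, Rabs_R0; apply Rabs_pos_lt, Hx|].
  apply Hnear. split; [split; [exact I | congruence] | exact Hy]. }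
destruct (Rle_lt_dec 0 (g x)).
- rewrite (Rabs_pos_eq (g x)) in Hgy by lra. apply Rabs_def2 in Hgy. nra.
- rewrite (Rabs_left (g x)) in Hgy by lra. apply Rabs_def2 in Hgy. nra.
Qed.

Lemma is_derive_pos_at_root (g : R -> R) z d : is_derive g z d -> 0 < d -> g z = 0 ->
  exists eps, 0 < eps /\ forall h, 0 < h < eps -> g (z - h) < 0 < g (z + h).
Proof.
intros Hd Hpos Hz. apply is_derive_Reals in Hd.
destruct (Hd (d / 2) ltac:(lra)) as [del Hdel].
exists del. split; [apply cond_pos|]. intros h Hh.
assert (Hr := Hdel h ltac:(lra) ltac:(rewrite Rabs_pos_eq; lra)).
assert (Hl := Hdel (- h) ltac:(lra) ltac:(rewrite Rabs_left; lra)).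
rewrite Hz, Rminus_0_r in Hr, Hl. apply Rabs_def2 in Hr, Hl.
replace (z + - h) with (z - h) in Hl by ring.
assert (Er : g (z + h) / h * h = g (z + h)) by (field; lra).
assert (El : g (z - h) / - h * - h = g (z - h)) by (field; lra).
split; nra.
Qed.

Section SignChange.

Variable g : R -> R.
Hypothesis g_cont : continuity g.

Definition roots_cross_up (a b : R) :=
  forall z, a <= z <= b -> g z = 0 -> exists d, is_derive g z d /\ 0 < d.

Lemma roots_cross_up_nonneg a b : roots_cross_up a b -> a <= b -> 0 <= g a -> 0 <= g b.
Proof.
intros Hroots Hab Ha. apply Rnot_lt_le. intros Hb.
set (E := fun y => a <= y <= b /\ 0 <= g y).
destruct (completeness E) as [z [Hub Hlub]].
{ exists b. intros y Hy. apply Hy. }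
{ exists a. split; lra. }
assert (Haz : a <= z) by (apply Hub; split; lra).
assert (Hzb : z <= b) by (apply Hlub; intros y Hy; apply Hy).
assert (Hright : forall y, z < y <= b -> g y < 0).
{ intros y Hy. apply Rnot_le_lt. intros Hgy.
  assert (y <= z) by (apply Hub; split; lra). lra. }
assert (Hgz : g z = 0).
{ destruct (Req_dec (g z) 0) as [|Hne]; [assumption|].
  destruct (continuity_pt_sign_near g z (g_cont z) Hne) as [del [Hdel Hnear]].
  destruct (Rlt_le_dec (g z) 0) as [Hneg|Hnn].
  - assert (z <= z - del).
    { apply Hlub. intros y [Hy Hgy]. assert (y <= z) by (apply Hub; split; lra).
      destruct (Rle_lt_dec y (z - del)) as [|Hfar]; [assumption|].
      assert (0 < g y * g z) by (apply Hnear; rewrite Rabs_left1; lra). nra. }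
    lra.
  - assert (Hzb' : z < b) by (destruct (Req_dec z b); [subst; lra | lra]).
    set (y := z + Rmin del (b - z) / 2).
    assert (0 < Rmin del (b - z) <= Rmin del (b - z)) by (split; [apply Rmin_glb_lt|]; lra).
    pose proof (Rmin_l del (b - z)). pose proof (Rmin_r del (b - z)).
    assert (0 < g y * g z) by (apply Hnear; unfold y; rewrite Rabs_pos_eq; lra).
    assert (g y < 0) by (apply Hright; unfold y; lra). nra. }
assert (Hzb' : z < b) by (destruct (Req_dec z b); [subst; lra | lra]).
destruct (Hroots z ltac:(lra) Hgz) as [d [Hd Hdpos]].
destruct (is_derive_pos_at_root g z d Hd Hdpos Hgz) as [eps [Heps Hsign]].
set (h := Rmin eps (b - z) / 2).
assert (0 < Rmin eps (b - z)) by (apply Rmin_glb_lt; lra).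
pose proof (Rmin_l eps (b - z)). pose proof (Rmin_r eps (b - z)).
assert (0 < g (z + h)) by (apply Hsign; unfold h; lra).
assert (g (z + h) < 0) by (apply Hright; unfold h; lra). lra.
Qed.

Lemma roots_cross_up_pos a b : roots_cross_up a b -> a < b -> 0 <= g a -> 0 < g b.
Proof.
intros Hroots Hab Ha.
pose proof (roots_cross_up_nonneg a b Hroots ltac:(lra) Ha) as Hb.
destruct (Req_dec (g b) 0) as [Hgb|]; [|lra].
destruct (Hroots b ltac:(lra) Hgb) as [d [Hd Hdpos]].
destruct (is_derive_pos_at_root g b d Hd Hdpos Hgb) as [eps [Heps Hsign]].
set (h := Rmin eps (b - a) / 2).
assert (0 < Rmin eps (b - a)) by (apply Rmin_glb_lt; lra).
pose proof (Rmin_l eps (b - a)). pose proof (Rmin_r eps (b - a)).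
assert (g (b - h) < 0) by (apply Hsign; unfold h; lra).
assert (0 <= g (b - h)).
{ apply (roots_cross_up_nonneg a); [|unfold h; lra|exact Ha].
  intros z Hz. apply Hroots. unfold h in Hz; lra. }
lra.
Qed.

Lemma unique_sign_change S : g S < 0 -> (forall x, 0 <= x -> 0 < g x) ->
  (forall z, z < 0 -> g z = 0 -> exists d, is_derive g z d /\ 0 < d) ->
  exists z0, z0 < 0 /\ forall x, (z0 < x -> 0 < g x) /\ (x < z0 -> g x < 0).
Proof.
intros HS Hpos Hroots.
assert (HS0 : S < 0) by (apply Rnot_le_lt; intros H; specialize (Hpos S H); lra).
destruct (IVT g S 0 g_cont HS0 HS (Hpos 0 (Rle_refl 0))) as [z0 [Hz0 Hgz0]].
assert (Hz0neg : z0 < 0) by (destruct (Req_dec z0 0) as [->|]; [specialize (Hpos 0 (Rle_refl 0)); lra | lra]).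
exists z0. split; [exact Hz0neg|]. intros x. split; intros Hx.
- destruct (Rle_lt_dec 0 x) as [|Hxneg]; [apply Hpos; assumption|].
  apply (roots_cross_up_pos z0); [|exact Hx|lra].
  intros z Hz. apply Hroots. lra.
- apply Rnot_le_lt. intros Hgx.
  assert (0 < g z0).
  { apply (roots_cross_up_pos x); [|exact Hx|exact Hgx].
    intros z Hz. apply Hroots. lra. }
  lra.
Qed.

End SignChange.

(** * The solution curve of [G2 = 0] *)

Section RootCurve.

Variables l r al be d : R.
Hypothesis l_pos : 0 < l.
Hypothesis r_pos : 0 < r.
Hypothesis al_pos : 0 < al.
Hypothesis be_lt1 : be < 1.
Hypothesis d_range : 0 < d < 1.

Lemma slope_pos : 0 < (1 - be) / al.
Proof. apply Rdiv_lt_0_compat; lra. Qed.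

Lemma B_of_pos A : A < A_M l r al be -> 0 < B_of l r al be A.
Proof.
intros HA. pose proof slope_pos.
replace (B_of l r al be A) with ((1 - be) / al * (A_M l r al be - A))
  by (unfold B_of, A_M; field; lra).
nra.
Qed.

Definition ua (Q A : R) : R := S_a Q A + d * Q.
Definition ub (Q A : R) : R := S_b l r al be Q A + d * Q.

(* [Gq / (ua * ub)] and [- GA] are the partial derivatives of [G2] in [Q] and in [A]. *)
Definition Gq (Q A : R) : R := gq d Q (S_a Q A) (S_b l r al be Q A).
Definition GA (Q A : R) : R :=
  1 + A / ua Q A + (1 - be) / al * B_of l r al be A / ub Q A.

Definition Gq_dQ (Q A : R) : R := gq_dQ d Q (S_a Q A) (S_b l r al be Q A).

Lemma Gq_ua_ub Q A :
  Gq Q A = d * (ua Q A * ub Q A) * ln (ua Q A / ub Q A) + Q * (1 - d ^ 2) * (ua Q A - ub Q A).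
Proof. reflexivity. Qed.

Lemma ua_pos Q A : 0 < A -> 0 < ua Q A.
Proof. intros HA. apply shifted_sqrt_pos; [lra|]. rewrite Rabs_pos_eq; lra. Qed.

Lemma ub_pos Q A : A < A_M l r al be -> 0 < ub Q A.
Proof.
intros HA. pose proof (B_of_pos A HA).
apply shifted_sqrt_pos; [lra|]. rewrite Rabs_pos_eq; lra.
Qed.

Lemma GA_pos Q A : 0 < A < A_M l r al be -> 0 < GA Q A.
Proof.
intros [HA HAM]. pose proof (ua_pos Q A HA). pose proof (ub_pos Q A HAM).
pose proof (B_of_pos A HAM). pose proof slope_pos. unfold GA.
assert (0 < A / ua Q A) by (apply Rdiv_lt_0_compat; lra).
assert (0 < (1 - be) / al * B_of l r al be A / ub Q A)
  by (apply Rdiv_lt_0_compat; [apply Rmult_lt_0_compat|]; lra).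
lra.
Qed.

Lemma Gq_eq_0_of_ua_eq Q A : A < A_M l r al be -> ua Q A = ub Q A -> Gq Q A = 0.
Proof.
intros HAM E. pose proof (ub_pos Q A HAM).
rewrite Gq_ua_ub, E, Rdiv_diag, ln_1 by lra. ring.
Qed.

Lemma G2_root_sgn Q A : 0 < A < A_M l r al be -> G2 l r al be Q A d = 0 ->
  sgn (ua Q A - ub Q A) = sgn (l - r).
Proof.
intros [HA HAM] HG.
pose proof (ua_pos Q A HA) as Hu. pose proof (ub_pos Q A HAM) as Hv.
pose proof (B_of_pos A HAM) as HB. pose proof slope_pos as Hk.
assert (EA : A - l = d * Q * ln (ua Q A / ub Q A) - (ua Q A - ub Q A))
  by (unfold G2, N_of, ua, ub in *; lra).
assert (Hle : (A - l) * (ua Q A - ub Q A) <= 0).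
{ pose proof (sqrt_pos (Q ^ 2 + A ^ 2)).
  pose proof (sqrt_pos (Q ^ 2 + B_of l r al be A ^ 2)).
  pose proof (sub_mul_ln_div_le (ua Q A) (ub Q A) (d * Q) Hu Hv
    ltac:(unfold ua, S_a; lra) ltac:(unfold ub, S_b; lra)).
  rewrite EA. nra. }
assert (Hsgn : sgn (ua Q A - ub Q A) = sgn (A - B_of l r al be A)).
{ replace (ua Q A - ub Q A) with (S_a Q A - S_b l r al be Q A) by (unfold ua, ub; ring).
  apply sgn_sqrt_sum_sqr_sub; lra. }
apply sgn_eq_same_side in Hsgn as [Hp [H0 Hn]].
assert (Hzero : ua Q A = ub Q A -> A = l).
{ intros E. rewrite E, Rdiv_diag, ln_1 in EA by lra. lra. }
assert (EB : l - r = (A - B_of l r al be A) - ((1 - be) / al + 1) * (A - l))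
  by (unfold B_of; ring).
apply sgn_eq_same_side. repeat split; intros H.
- specialize (Hp H). assert (A - l <= 0) by nra. nra.
- specialize (H0 H). specialize (Hzero ltac:(lra)). nra.
- specialize (Hn H). assert (0 <= A - l) by nra. nra.
Qed.

Lemma Gq_sign_nonneg Q A : 0 <= Q -> 0 < A < A_M l r al be -> ua Q A <> ub Q A ->
  0 < (ua Q A - ub Q A) * Gq Q A.
Proof.
intros HQ [HA HAM] Hne.
pose proof (ua_pos Q A HA) as Hu. pose proof (ub_pos Q A HAM) as Hv.
pose proof (ln_div_mul_sub_pos _ _ Hu Hv Hne) as Hln.
assert (0 < d * (ua Q A * ub Q A)) by (apply Rmult_lt_0_compat; nra).
assert (0 <= Q * (1 - d ^ 2)) by (apply Rmult_le_pos; nra).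
replace ((ua Q A - ub Q A) * Gq Q A) with
  (d * (ua Q A * ub Q A) * (ln (ua Q A / ub Q A) * (ua Q A - ub Q A))
   + Q * (1 - d ^ 2) * (ua Q A - ub Q A) ^ 2) by (rewrite Gq_ua_ub; ring).
apply Rplus_lt_le_0_compat; [apply Rmult_lt_0_compat | apply Rmult_le_pos]; trivial.
apply pow2_ge_0.
Qed.

Lemma Gq_sign_far Q A : 0 < A < A_M l r al be ->
  d * A < (1 - d) * - Q -> d * B_of l r al be A < (1 - d) * - Q -> ua Q A <> ub Q A ->
  (ua Q A - ub Q A) * Gq Q A < 0.
Proof.
intros [HA HAM] HAQ HBQ Hne.
pose proof (B_of_pos A HAM) as HB.
replace (Gq Q A) with (d * (ua Q A * ub Q A) * ln (ua Q A / ub Q A)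
                       - (- Q * (1 - d ^ 2)) * (ua Q A - ub Q A)) by (rewrite Gq_ua_ub; ring).
apply sub_mul_ln_gap_neg; [apply ua_pos; lra | apply ub_pos; lra | exact Hne | lra | |].
- apply mul_shifted_sqrt_lt; lra.
- apply mul_shifted_sqrt_lt; lra.
Qed.

Lemma Gq_dQ_root_sign Q A : Q < 0 -> 0 < A < A_M l r al be -> ua Q A <> ub Q A ->
  Gq Q A = 0 -> 0 < (ua Q A - ub Q A) * Gq_dQ Q A.
Proof.
intros HQ [HA HAM] Hne Hroot.
pose proof (B_of_pos A HAM) as HB.
pose proof (sqrt_sum_sqr_gt_abs Q A ltac:(lra)) as Hsa.
pose proof (sqrt_sum_sqr_gt_abs Q (B_of l r al be A) ltac:(lra)) as Hsb.
rewrite Rabs_left in Hsa, Hsb by exact HQ.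
replace (ua Q A - ub Q A) with (S_a Q A - S_b l r al be Q A) by (unfold ua, ub; ring).
apply gq_dQ_root_sign; try assumption. intros E. apply Hne. unfold ua, ub. rewrite E. reflexivity.
Qed.

Variable a : R -> R.
Hypothesis a_root : forall Q, 0 < a Q < A_M l r al be /\ G2 l r al be Q (a Q) d = 0.
Hypothesis a_der : forall Q, ex_derive a Q.

(* [auto_derive] writes [x ^ 2] as [x * (x * 1)] and [x - y] as [x + - y]; normalising
   the context the same way lets [nra] and [field] identify the square roots. *)
Local Ltac auto_derive_along_curve Q :=
  destruct (a_root Q) as [[HA HAM] _];
  pose proof (ua_pos Q _ HA); pose proof (ub_pos Q _ HAM) as Hub;
  pose proof (Rinv_0_lt_compat _ Hub); pose proof (B_of_pos _ HAM) as HB;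
  pose proof (sqrt_sum_sqr_pos Q _ (Rgt_not_eq _ _ HA));
  pose proof (sqrt_sum_sqr_pos Q _ (Rgt_not_eq _ _ HB));
  unfold G2, N_of, Gq, Gq_dQ, gq, gq_dQ, GA, ua, ub, S_a, S_b, B_of in *; clear a_root;
  auto_derive; cbn [pow] in *; unfold Rminus, Rdiv in *;
  [repeat split; first [exact I | apply a_der | apply Rgt_not_eq; lra | nra] | ..];
  change (Derive (fun x => a x)) with (Derive a) in *.

Lemma is_derive_G2_curve Q :
  is_derive (fun Q => G2 l r al be Q (a Q) d) Q
    (Gq Q (a Q) / (ua Q (a Q) * ub Q (a Q)) - GA Q (a Q) * Derive a Q).
Proof. auto_derive_along_curve Q. field. repeat split; lra. Qed.

Lemma ex_derive_Gq_curve Q : ex_derive (fun Q => Gq Q (a Q)) Q.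
Proof. auto_derive_along_curve Q. Qed.

Lemma is_derive_Gq_curve_flat Q : Derive a Q = 0 ->
  is_derive (fun Q => Gq Q (a Q)) Q (Gq_dQ Q (a Q)).
Proof.
intros Hflat. auto_derive_along_curve Q. rewrite Hflat. field. repeat split; lra.
Qed.

Lemma Derive_curve Q :
  Derive a Q = Gq Q (a Q) / (ua Q (a Q) * ub Q (a Q)) / GA Q (a Q).
Proof.
pose proof (GA_pos Q (a Q) (proj1 (a_root Q))) as HGA.
assert (Hflat : is_derive (fun Q => G2 l r al be Q (a Q) d) Q 0).
{ apply (is_derive_ext (fun _ => 0)); [intros t; symmetry; apply a_root|]. auto_derive; auto. }
pose proof (is_derive_unique _ _ _ (is_derive_G2_curve Q)) as E1.
rewrite (is_derive_unique _ _ _ Hflat) in E1.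
assert (E2 : GA Q (a Q) * Derive a Q = Gq Q (a Q) / (ua Q (a Q) * ub Q (a Q))) by lra.
rewrite <- E2. field. lra.
Qed.

Lemma sgn_Derive_curve Q : sgn (Derive a Q) = sgn (Gq Q (a Q)).
Proof.
destruct (a_root Q) as [HAr _].
pose proof (ua_pos Q _ (proj1 HAr)). pose proof (ub_pos Q _ (proj2 HAr)).
rewrite Derive_curve, sgn_div_pos, sgn_div_pos; [reflexivity | |apply GA_pos; exact HAr].
apply Rmult_lt_0_compat; assumption.
Qed.

Lemma Derive_curve_eq_0 : l = r -> forall Q, Derive a Q = 0.
Proof.
intros Elr Q. destruct (a_root Q) as [HAr HG].
pose proof (G2_root_sgn Q (a Q) HAr HG) as Hsep.
rewrite Elr, Rminus_diag, sgn_0 in Hsep.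
rewrite Derive_curve, Gq_eq_0_of_ua_eq; [unfold Rdiv; ring | apply HAr |].
destruct (sgn_cases (ua Q (a Q) - ub Q (a Q))) as [[_ E]|[[E _]|[_ E]]]; lra.
Qed.

Section Separated.

Hypothesis lr_neq : l <> r.

Lemma sgn_sub_mul_ua_sub_ub_pos Q : 0 < sgn (l - r) * (ua Q (a Q) - ub Q (a Q)).
Proof.
destruct (a_root Q) as [HAr HG]. rewrite <- (G2_root_sgn Q (a Q) HAr HG).
destruct (sgn_cases (ua Q (a Q) - ub Q (a Q))) as [[? ->]|[[? E]|[? ->]]]; try lra.
rewrite (G2_root_sgn Q (a Q) HAr HG) in E.
destruct (sgn_cases (l - r)) as [[_ E']|[[? _]|[_ E']]]; lra.
Qed.

Lemma ua_neq_ub Q : ua Q (a Q) <> ub Q (a Q).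
Proof.
intros E. pose proof (sgn_sub_mul_ua_sub_ub_pos Q) as H.
rewrite E, Rminus_diag, Rmult_0_r in H. lra.
Qed.

Lemma Gq_curve_neg_far : exists S, sgn (l - r) * Gq S (a S) < 0.
Proof.
set (M := A_M l r al be + (1 - be) / al * l + r).
set (S := - (d * M / (1 - d)) - 1).
exists S. destruct (a_root S) as [[HA HAM] _]. pose proof slope_pos.
assert (HM : d * M < (1 - d) * - S) by (unfold S; field_simplify; lra).
assert (0 < sgn (l - r) * - Gq S (a S)); [|lra].
apply (mul_pos_transfer _ (ua S (a S) - ub S (a S)));
  [apply sgn_sqr; lra | apply sgn_sub_mul_ua_sub_ub_pos |].
rewrite Ropp_mult_distr_r_reverse. apply Ropp_0_gt_lt_contravar.
apply Gq_sign_far; [lra | | | apply ua_neq_ub].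
- assert (a S < M) by (unfold M; nra). nra.
- assert (B_of l r al be (a S) < M) by (unfold M, B_of; nra). nra.
Qed.

Lemma Gq_curve_pos_nonneg Q : 0 <= Q -> 0 < sgn (l - r) * Gq Q (a Q).
Proof.
intros HQ. apply (mul_pos_transfer _ (ua Q (a Q) - ub Q (a Q)));
  [apply sgn_sqr; lra | apply sgn_sub_mul_ua_sub_ub_pos |].
apply Gq_sign_nonneg; [exact HQ | apply a_root | apply ua_neq_ub].
Qed.

Lemma Gq_curve_crosses_up z : z < 0 -> sgn (l - r) * Gq z (a z) = 0 ->
  exists dz, is_derive (fun Q => sgn (l - r) * Gq Q (a Q)) z dz /\ 0 < dz.
Proof.
intros Hz Hgz.
assert (Hroot : Gq z (a z) = 0).
{ destruct (Rmult_integral _ _ Hgz) as [E|E]; [|exact E].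
  pose proof (sgn_sqr (l - r) ltac:(lra)) as Hsq. rewrite E in Hsq. lra. }
assert (Hflat : Derive a z = 0) by (rewrite Derive_curve, Hroot; unfold Rdiv; ring).
exists (sgn (l - r) * Gq_dQ z (a z)). split.
- apply is_derive_scal, is_derive_Gq_curve_flat, Hflat.
- apply (mul_pos_transfer _ (ua z (a z) - ub z (a z)));
    [apply sgn_sqr; lra | apply sgn_sub_mul_ua_sub_ub_pos |].
  apply Gq_dQ_root_sign; [exact Hz | apply a_root | apply ua_neq_ub | exact Hroot].
Qed.

End Separated.

Lemma Derive_sign_switch_pos_delta : exists Qm, Qm < 0 /\
  forall Q, (Qm < Q -> sgn (Derive a Q) = sgn (l - r)) /\
            (Q < Qm -> sgn (Derive a Q) = - sgn (l - r)).
Proof.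
destruct (Req_dec l r) as [Elr|Nlr].
{ exists (-1). split; [lra|]. intros Q.
  rewrite Derive_curve_eq_0, Elr, Rminus_diag, sgn_0 by exact Elr. split; intros; ring. }
pose proof (sgn_sqr (l - r) ltac:(lra)) as Hsq.
assert (Hcont : continuity (fun Q => sgn (l - r) * Gq Q (a Q)))
  by (intros Q; apply continuity_pt_of_ex_derive, ex_derive_scal, ex_derive_Gq_curve).
destruct (Gq_curve_neg_far Nlr) as [S HS].
destruct (unique_sign_change _ Hcont S HS (Gq_curve_pos_nonneg Nlr) (Gq_curve_crosses_up Nlr))
  as [Qm [HQm Hsign]].
exists Qm. split; [exact HQm|]. intros Q. rewrite sgn_Derive_curve.
destruct (Hsign Q) as [Hright Hleft]. split; intros HQ.
- apply sgn_of_mul_pos; [exact Hsq | exact (Hright HQ)].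
- apply sgn_of_mul_pos; [lra|]. specialize (Hleft HQ). lra.
Qed.

End RootCurve.

Lemma G2_reflect l r al be Q A d : G2 l r al be (- Q) A d = G2 l r al be Q A (- d).
Proof.
unfold G2, N_of, S_a, S_b.
replace ((- Q) ^ 2) with (Q ^ 2) by ring. replace (d * - Q) with (- d * Q) by ring.
ring.
Qed.

Lemma Derive_comp_opp (f : R -> R) x : ex_derive f (- x) ->
  Derive (fun x => f (- x)) x = - Derive f (- x).
Proof.
intros Hf. apply is_derive_unique.
replace (- Derive f (- x)) with (-1 * Derive f (- x)) by ring.
apply (is_derive_comp f Ropp). { apply Derive_correct, Hf. }
auto_derive; [exact I | ring].
Qed.

Lemma Derive_sign_switch_neg_delta l r al be d (a : R -> R) :
  0 < l -> 0 < r -> 0 < al -> be < 1 -> -1 < d < 0 ->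
  (forall Q, 0 < a Q < A_M l r al be /\ G2 l r al be Q (a Q) d = 0) ->
  (forall Q, ex_derive a Q) ->
  exists Qp, 0 < Qp /\
    forall Q, (Q < Qp -> sgn (Derive a Q) = - sgn (l - r)) /\
              (Qp < Q -> sgn (Derive a Q) = sgn (l - r)).
Proof.
intros Hl Hr Hal Hbe Hd Hroot Hder.
assert (Hroot' : forall Q, 0 < a (- Q) < A_M l r al be /\ G2 l r al be Q (a (- Q)) (- d) = 0)
  by (intros Q; rewrite <- G2_reflect; apply Hroot).
assert (Hder' : forall Q, ex_derive (fun Q => a (- Q)) Q)
  by (intros Q; apply (ex_derive_comp a Ropp); [apply Hder | auto_derive; exact I]).
destruct (Derive_sign_switch_pos_delta l r al be (- d) Hl Hr Hal Hbe ltac:(lra)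
            (fun Q => a (- Q)) Hroot' Hder') as [Qm [HQm Hsign]].
exists (- Qm). split; [lra|]. intros Q.
destruct (Hsign (- Q)) as [Hright Hleft].
rewrite Derive_comp_opp, Ropp_involutive, sgn_opp in Hright, Hleft
  by (rewrite Ropp_involutive; apply Hder).
split; intros HQ; [specialize (Hright ltac:(lra)) | specialize (Hleft ltac:(lra))]; lra.
Qed.

Lemma delta_of_pos D1 D2 : 0 < D1 -> D1 < D2 -> 0 < delta_of D1 D2 < 1.
Proof.
intros H1 H12. unfold delta_of. split.
- apply Rdiv_lt_0_compat; lra.
- apply Rlt_div_l; lra.
Qed.

Lemma delta_of_neg D1 D2 : 0 < D2 -> D2 < D1 -> -1 < delta_of D1 D2 < 0.
Proof.
intros H2 H21. unfold delta_of. split.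
- apply Rlt_div_r; lra.
- apply Rdiv_neg_pos; lra.
Qed.

Theorem theorem3p6 (l r alpha beta D1 D2 : R) (Afun : R -> R) :
  0 < l -> 0 < r -> 0 < alpha -> alpha < beta -> beta < 1 ->
  0 < D1 -> 0 < D2 ->
  (* Afun Q0 = A(Q0, delta): the solution in (0, A_M) of G2 = 0,
     differentiable in Q0 (known facts recorded as hypotheses) *)
  (forall Q0, 0 < Afun Q0 < A_M l r alpha beta /\
              G2 l r alpha beta Q0 (Afun Q0) (delta_of D1 D2) = 0) ->
  (forall Q0, ex_derive Afun Q0) ->
  (D1 < D2 ->
     exists Qm, Qm < 0 /\
       forall Q0,
         (Qm < Q0 -> sgn (Derive Afun Q0) = sgn (l - r)) /\
         (Q0 < Qm -> sgn (Derive Afun Q0) = - sgn (l - r))) /\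
  (D2 < D1 ->
     exists Qp, 0 < Qp /\
       forall Q0,
         (Q0 < Qp -> sgn (Derive Afun Q0) = - sgn (l - r)) /\
         (Qp < Q0 -> sgn (Derive Afun Q0) = sgn (l - r))).
Proof.
intros Hl Hr Hal _ Hbe HD1 HD2 Hroot Hder. split; intros HD.
- exact (Derive_sign_switch_pos_delta l r alpha beta (delta_of D1 D2) Hl Hr Hal Hbe
           (delta_of_pos D1 D2 HD1 HD) Afun Hroot Hder).
- exact (Derive_sign_switch_neg_delta l r alpha beta (delta_of D1 D2) Afun Hl Hr Hal Hbe
           (delta_of_neg D1 D2 HD2 HD) Hroot Hder).
Qed.
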